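(* Let $G=(V,E)$ be a connected graph with $\delta(G)\geq 3$ and vertex connectivity $\kappa(G)\geq 2$. Then $V$ can be partitioned into three sets $L$, $R$, $O$ with $|O|\leq 1$ such that every vertex of $L$ has at least two neighbors in $R\cup O$ and every vertex of $R$ has at least two neighbors in $L\cup O$. Moreover, if $G$ contains a cycle of even length, such a partition exists with $O=\emptyset$.
   Context: All graphs are finite and simple. A vertex cut of a connected graph is a set of vertices whose removal leaves a disconnected or trivial graph; $\kappa(G)$ is the minimum size of a vertex cut. *)

(* A finite simple graph is a symmetric irreflexive
   relation e on a finType T (vertex set = all of T). *)
From mathcomp Require Import all_boot.
Set Implicit Arguments. Unset Strict Implicit. Unset Printing Implicit Defensive.

Section Graphs.
Variables (T : finType) (e : rel T).

Definition induced_rel (A : {set T}) : rel T :=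
  [rel x y | [&& e x y, x \in A & y \in A]].

Definition connected_on (A : {set T}) : bool :=
  [forall x in A, forall y in A, connect (induced_rel A) x y].

Definition connected_graph : bool := connected_on setT.

Definition nbhd (x : T) : {set T} := [set y | e x y].
Definition deg (x : T) : nat := #|nbhd x|.
Definition min_degree_ge (k : nat) : Prop := forall x, k <= deg x.

Definition vertex_cut (S : {set T}) : bool :=
  ~~ connected_on (~: S) || (#|~: S| <= 1).

(* kappa(G): the minimum size of a vertex cut (setT is always a cut). *)
Definition kappa : nat :=
  \big[minn/#|T|]_(S : {set T} | vertex_cut S) #|S|.

Definition has_even_cycle : Prop :=
  exists s : seq T, [/\ uniq s, 3 <= size s, cycle e s & ~~ odd (size s)].

Definition partition3 (L R O : {set T}) : Prop :=
  [/\ [disjoint L & R], [disjoint L & O], [disjoint R & O] & L :|: R :|: O = setT].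

Definition good_partition (L R O : {set T}) : Prop :=
  [/\ partition3 L R O,
      #|O| <= 1,
      (forall x, x \in L -> 2 <= #|nbhd x :&: (R :|: O)|) &
      (forall x, x \in R -> 2 <= #|nbhd x :&: (L :|: O)|)].

End Graphs.

From mathcomp Require Import all_boot.
From mathcomp Require Import zify.
Set Implicit Arguments. Unset Strict Implicit. Unset Printing Implicit Defensive.

(** A maximum cut (L, ~: L) already works, with O empty: moving a vertex x
    to the other side changes the cut by deg x - 2 * (number of neighbours of
    x across the cut), so at a maximum every x has at least half of its
    neighbours across, i.e. at least 2 when deg x >= 3. *)

Section MaxCut.
Variables (T : finType) (e : rel T).
Hypotheses (e_sym : symmetric e) (e_irr : irreflexive e).

Definition crossing (L : {set T}) (u v : T) : nat :=
  e u v && ((u \in L) != (v \in L)).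

(* Each crossing edge is counted twice, once per orientation. *)
Definition cut_weight (L : {set T}) : nat := \sum_u \sum_v crossing L u v.

Definition flip (L : {set T}) (x : T) : {set T} :=
  [set y | (y \in L) != (y == x)].

Definition other_side (L : {set T}) (x : T) : {set T} :=
  [set v | (x \in L) != (v \in L)].

Lemma sum_crossing_card L x :
  \sum_v crossing L x v = #|nbhd e x :&: other_side L x|.
Proof.
rewrite -sum1_card [RHS]big_mkcond /=; apply: eq_bigr => v _.
by rewrite /crossing !inE; case: (e x v).
Qed.

Lemma cut_weight_split L x :
  cut_weight L = (\sum_v crossing L x v).*2
                 + \sum_(u | u != x) \sum_(v | v != x) crossing L u v.
Proof.
have column_x : \sum_(u | u != x) crossing L u x = \sum_v crossing L x v.
  rewrite [RHS](bigD1 x) //= /crossing e_irr /= add0n.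
  by apply: eq_bigr => u _; rewrite e_sym eq_sym.
rewrite /cut_weight [LHS](bigD1 x) //= -addnn -addnA; congr (_ + _).
rewrite -column_x -big_split /=.
by apply: eq_bigr => u _; rewrite (bigD1 x).
Qed.

Lemma sum_crossing_flip_off L x :
  \sum_(u | u != x) \sum_(v | v != x) crossing (flip L x) u v
  = \sum_(u | u != x) \sum_(v | v != x) crossing L u v.
Proof.
apply: eq_bigr => u /negbTE ux; apply: eq_bigr => v /negbTE vx.
by rewrite /crossing !inE ux vx; case: (u \in L); case: (v \in L).
Qed.

Lemma sum_crossing_flip_at L x :
  \sum_v crossing (flip L x) x v + \sum_v crossing L x v = deg e x.
Proof.
rewrite -big_split /deg -sum1_card [RHS]big_mkcond /=.
apply: eq_bigr => v _; rewrite /crossing !inE eqxx.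
case: (eqVneq v x) => [->|_]; first by rewrite e_irr.
by case: (e x v); case: (x \in L); case: (v \in L).
Qed.

Lemma max_cut_deg_le L x : (forall L', cut_weight L' <= cut_weight L) ->
  deg e x <= #|nbhd e x :&: other_side L x|.*2.
Proof.
move=> L_max; have := L_max (flip L x).
rewrite !(cut_weight_split _ x) sum_crossing_flip_off -sum_crossing_card.
by have := sum_crossing_flip_at L x; lia.
Qed.

Lemma max_cut_exists : exists L, forall L', cut_weight L' <= cut_weight L.
Proof.
have [L _ L_max] := @arg_maxnP _ (set0 : {set T}) xpredT cut_weight isT.
by exists L => L'; apply: L_max.
Qed.

End MaxCut.

Lemma other_side_in (T : finType) (L : {set T}) x :
  x \in L -> other_side L x = ~: L.
Proof. by move=> xL; apply/setP => v; rewrite !inE xL; case: (v \in L). Qed.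

Lemma other_side_notin (T : finType) (L : {set T}) x :
  x \notin L -> other_side L x = L.
Proof. by move=> /negbTE xL; apply/setP => v; rewrite !inE xL; case: (v \in L). Qed.

Lemma partition3_setC (T : finType) (L : {set T}) :
  partition3 L (~: L) set0.
Proof.
rewrite /partition3; split; rewrite ?setU0 ?setUCr // -setI_eq0 ?setICr ?setI0 //.
Qed.

Lemma good_cut_of_min_degree_ge3 (T : finType) (e : rel T) :
  symmetric e -> irreflexive e -> min_degree_ge e 3 ->
  exists L : {set T}, good_partition e L (~: L) set0.
Proof.
move=> e_sym e_irr deg_ge3; have [L L_max] := max_cut_exists e.
have across x : 2 <= #|nbhd e x :&: other_side L x|.
  by have := max_cut_deg_le e_sym e_irr x L_max; have := deg_ge3 x; lia.
exists L; split; rewrite ?cards0 //; first exact: partition3_setC.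
- by move=> x xL; rewrite setU0 -(other_side_in xL).
- by move=> x; rewrite inE => xL; rewrite setU0 -(other_side_notin xL).
Qed.

Theorem mainTheorem5 (T : finType) (e : rel T)
    (e_sym : symmetric e) (e_irr : irreflexive e)
    (Hconn : connected_graph e)
    (Hdeg : min_degree_ge e 3)
    (Hkappa : 2 <= kappa e) :
  (exists L R O : {set T}, good_partition e L R O) /\
  (has_even_cycle e -> exists L R : {set T}, good_partition e L R set0).
Proof.
have [L good_L] := good_cut_of_min_degree_ge3 e_sym e_irr Hdeg.
split; first by exists L, (~: L), set0.
by move=> _; exists L, (~: L).
Qed.
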